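(* Let $p$ be an integer such that $2p = q(q+1)$ for some integer $q$ with $q \neq 0$ and $q + 1 \neq 0$, and suppose $q$ cannot be written as $q_1(q_1+1)$ for an integer $q_1$. Then $3p^3$ is represented by the following two sums of three integer cubes: $$\{-p - 2p(1 + 1)\}^3 + \left\{p + 2p\left(1 + \frac{1}{2}\right)\right\}^3 + \left\{p + 2p\left(1 + \frac{1}{2}\right)\right\}^3 = 3p^3$$ and $$\left\{-p - 2p\left(q + \frac{1}{q}\right)\right\}^3 + \left\{p + 2p\left(q + \frac{1}{q+1}\right)\right\}^3 + \left\{p + 2p\left(\frac{1}{q} + \frac{q}{q+1}\right)\right\}^3 = 3p^3.$$ *)

From mathcomp Require Import all_boot all_order all_algebra.
Set Implicit Arguments. Unset Strict Implicit. Unset Printing Implicit Defensive.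

From mathcomp Require Import all_boot all_order all_algebra.
From mathcomp Require Import ring.
Import Order.TTheory GRing.Theory Num.Theory.
Local Open Scope ring_scope.

(* The first triple is -5p, 4p, 4p.  Under 2p = q(q+1) we have 2p/q = q+1
   and 2p/(q+1) = q, so the second triple is the integer triple -(b+1), b,
   3p+1 with b = p(2q+1) + q, whose sum of cubes differs from 3p^3 by a
   multiple of 2p - q(q+1). *)

Lemma sum_cubes_m5_4_4 (R : comPzRingType) (x : R) :
  (- (5 * x)) ^+ 3 + (4 * x) ^+ 3 + (4 * x) ^+ 3 = 3 * x ^+ 3.
Proof. ring. Qed.

Lemma sum_cubes_triangular (R : comPzRingType) (x y : R) :
  2 * x = y * (y + 1) ->
  (- (x * (2 * y + 1) + y + 1)) ^+ 3 + (x * (2 * y + 1) + y) ^+ 3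
    + (3 * x + 1) ^+ 3 = 3 * x ^+ 3.
Proof.
move=> hxy; apply/eqP; rewrite -subr_eq0.
have -> : (- (x * (2 * y + 1) + y + 1)) ^+ 3 + (x * (2 * y + 1) + y) ^+ 3
    + (3 * x + 1) ^+ 3 - 3 * x ^+ 3 = 3 * (2 * x - y * (y + 1)) * (2 * x + 1) ^+ 2.
  by ring.
by rewrite hxy subrr mulr0 mul0r.
Qed.

Section TriangularBases.

Variables (F : fieldType) (x y : F).
Hypotheses (hxy : 2 * x = y * (y + 1)) (hy : y != 0) (hy1 : y + 1 != 0).

Lemma triangular_divl : 2 * x / y = y + 1.
Proof. by rewrite hxy mulrC mulKf. Qed.

Lemma triangular_divr : 2 * x / (y + 1) = y.
Proof. by rewrite hxy mulfK. Qed.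

Lemma triangular_baseA :
  - x - 2 * x * (y + 1 / y) = - (x * (2 * y + 1) + y + 1).
Proof. by rewrite div1r mulrDr triangular_divl; ring. Qed.

Lemma triangular_baseB :
  x + 2 * x * (y + 1 / (y + 1)) = x * (2 * y + 1) + y.
Proof. by rewrite div1r mulrDr triangular_divr; ring. Qed.

Lemma triangular_baseC :
  x + 2 * x * (1 / y + y / (y + 1)) = 3 * x + 1.
Proof.
rewrite div1r mulrDr triangular_divl mulrCA triangular_divr.
by transitivity (x + 2 * x + 1); [rewrite hxy | ]; ring.
Qed.

End TriangularBases.

Theorem lemma3p3 (p q : int) :
  2 * p = q * (q + 1) -> q != 0 -> q + 1 != 0 ->
  ~ (exists q1 : int, q = q1 * (q1 + 1)) ->
  let P : rat := p%:~R in
  let Q : rat := q%:~R in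
  let a1 := - P - 2 * P * (1 + 1) in
  let b1 := P + 2 * P * (1 + 1 / 2) in
  let c1 := P + 2 * P * (1 + 1 / 2) in
  let a2 := - P - 2 * P * (Q + 1 / Q) in
  let b2 := P + 2 * P * (Q + 1 / (Q + 1)) in
  let c2 := P + 2 * P * (1 / Q + Q / (Q + 1)) in
  ([/\ a1 \is a Num.int, b1 \is a Num.int, c1 \is a Num.int &
      a1 ^+ 3 + b1 ^+ 3 + c1 ^+ 3 = 3 * P ^+ 3] /\
   [/\ a2 \is a Num.int, b2 \is a Num.int, c2 \is a Num.int &
      a2 ^+ 3 + b2 ^+ 3 + c2 ^+ 3 = 3 * P ^+ 3]).
Proof.
move=> hpq hq hq1 _ P Q a1 b1 c1 a2 b2 c2.
have hPQ : 2 * P = Q * (Q + 1).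
  by have := congr1 (intr : int -> rat) hpq; rewrite !intrM intrD.
have hQ : Q != 0 by rewrite intr_eq0.
have hQ1 : Q + 1 != 0 by rewrite -(intrD _ q 1) intr_eq0.
have [Pint Qint] : P \is a Num.int /\ Q \is a Num.int by rewrite !intr_int.
rewrite /b1 -/c1.
have -> : a1 = - (5 * P) by rewrite /a1; ring.
have -> : c1 = 4 * P by rewrite /c1; field.
rewrite /a2 /b2 /c2.
rewrite triangular_baseA // triangular_baseB // triangular_baseC //.
split; split; rewrite ?sum_cubes_m5_4_4 ?sum_cubes_triangular //;
  by rewrite ?(rpredN, rpredD, rpredM, rpred_nat, rpred1).
Qed.
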